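(* Let $(J,\preccurlyeq)$ be a finite upper semilattice and let $F\colon J\to \mathrm{vect}_K$ be a functor such that $\mathrm{supp}(\beta^0F)$ is bounded below in $J$ (so that its meet $\bigwedge \mathrm{supp}(\beta^0 F)$ exists). Then for every $d\geq 1$, \[ \langle \mathrm{supp}(\beta^{d+1}F)\rangle \subseteq \langle \mathrm{supp}(\beta^{d}F)\rangle, \] that is, $\cdots\subseteq\langle \mathrm{supp}(\beta^{3}F)\rangle\subseteq\langle \mathrm{supp}(\beta^{2}F)\rangle\subseteq\langle \mathrm{supp}(\beta^{1}F)\rangle$.
   Context: $K$ is a field and $\mathrm{vect}_K$ is the category of finite-dimensional $K$-vector spaces; $\mathrm{Fun}(J,\mathrm{vect}_K)$ is the abelian category of functors $J\to\mathrm{vect}_K$ with natural transformations as morphisms. For $a\in J$, $K(a,-)\colon J\to\mathrm{vect}_K$ is the functor with $K(a,b)=K$ if $a\preccurlyeq b$ and $0$ otherwise, with identity transition maps between nonzero values (free on one generator in degree $a$). Every functor $F\colon J\to\mathrm{vect}_K$ has a minimal projective resolution $\cdots\to C_1\to C_0\to F\to 0$ (each $C_d\to\ker(C_{d-1}\to C_{d-2})$ a projective cover, $C_{-1}=F$, $C_{-2}=0$), unique up to isomorphism, with $C_d\cong\bigoplus_{a\in J}K(a,-)^{\beta^dF(a)}$ for uniquely determined numbers; the function $\beta^dF\colon J\to\mathbb N$ is the $d$-th Betti diagram of $F$, and $\mathrm{supp}(\beta^dF)=\{a\in J\mid \beta^dF(a)\neq0\}$. An upper semilattice is a poset in which every nonempty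 subset has a join $\bigvee$. For $S\subseteq J$, $\langle S\rangle:=\{\bigvee T\mid T\neq\varnothing,\ T\subseteq S\}$ is the smallest subset containing $S$ closed under joins of nonempty subsets. *)

From HB Require Import structures.
From mathcomp Require Import all_boot all_order all_algebra.
Set Implicit Arguments. Unset Strict Implicit. Unset Printing Implicit Defensive.
Import Order.TTheory GRing.Theory.

Local Open Scope order_scope.

Section PersistenceModules.
Variables (disp : Order.disp_t) (J : finPOrderType disp) (K : fieldType).

Definition is_lub (T : {set J}) (a : J) : Prop :=
  (forall x, x \in T -> x <= a) /\
  (forall b, (forall x, x \in T -> x <= b) -> a <= b).

Definition upper_semilattice : Prop :=
  forall T : {set J}, T != set0 -> exists a, is_lub T a.

Definition in_join_closure (S : {set J}) (a : J) : Prop :=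
  exists T : {set J}, [/\ T != set0, T \subset S & is_lub T a].

Definition supp (b : J -> nat) : {set J} := [set a | b a != 0%N].

(* A (candidate) functor J -> vect_K: the value at a is K^(fdim a) (row
   vectors), and the transition map a -> b is right multiplication by
   fmap a b (only meaningful when a <= b). *)
Record fdata := FData {
  fdim : J -> nat;
  fmap : forall a b : J, 'M[K]_(fdim a, fdim b) }.

Definition is_functor (F : fdata) : Prop :=
  (forall a, fmap F a a = 1%:M)%R /\
  (forall a b c, a <= b -> b <= c -> fmap F a c = (fmap F a b *m fmap F b c)%R).

Definition ntrans (F G : fdata) := forall a : J, 'M[K]_(fdim F a, fdim G a).

Definition natural (F G : fdata) (eta : ntrans F G) : Prop :=
  forall a b, a <= b -> (fmap F a b *m eta b = eta a *m fmap G a b)%R.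

Definition is_iso (F G : fdata) (eta : ntrans F G) : Prop :=
  natural eta /\
  exists theta : ntrans G F, natural theta /\
    forall a, (eta a *m theta a = 1%:M)%R /\ (theta a *m eta a = 1%:M)%R.

(* The free functor  (+)_{a in J} K(a,-)^{m a}.  Its generators are the pairs
   (a, i) with i < m a; its value at b has as basis the generators (a,i) with
   a <= b, and transition maps send each basis generator to itself. *)
Definition gens (m : J -> nat) := {a : J & 'I_(m a)}.

Definition gens_below (m : J -> nat) (b : J) : {set gens m} :=
  [set g : gens m | tag g <= b].

Definition free (m : J -> nat) : fdata :=
  @FData (fun b => #|gens_below m b|)
    (fun b c => \matrix_(i, j)
       ((enum_val i == enum_val j :> gens m)%:R : K))%R.

(* Target of the d-th differential: C_{-1} = F, C_{d-1} otherwise. *)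
Definition below (F : fdata) (C : nat -> fdata) (d : nat) : fdata :=
  match d with 0 => F | d'.+1 => C d' end.

(* beta is the sequence of Betti diagrams of F: there is a minimal projective
   resolution  ... -> C_1 -> C_0 -> F -> 0  with C_d iso to
   (+)_a K(a,-)^{beta d a}.  Minimality: C_d -> ker(C_{d-1} -> C_{d-2}) is a
   projective cover, i.e. an epimorphism (image of f_d = kernel of f_{d-1},
   resp. f_0 surjective) which is right minimal: every endomorphism h of C_d
   with f_d o h = f_d is an isomorphism. *)
Definition betti_diagrams (F : fdata) (beta : nat -> J -> nat) : Prop :=
  exists (C : nat -> fdata) (f : forall d, ntrans (C d) (below F C d)),
    [/\ (forall d, is_functor (C d)) /\ (forall d, natural (f d)),
        forall a, row_full (f 0%N a),
        forall d a, (f d.+1 a == kermx (f d a))%MS,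
        forall d (h : ntrans (C d) (C d)), natural h ->
          (forall a, h a *m f d a = f d a)%R -> is_iso h
      & forall d, exists eta : ntrans (C d) (free (beta d)), is_iso eta].

End PersistenceModules.

(* A generator x of C_(d+1) in degree t is never redundant in a minimal
   resolution: if f(x) were also the image of some w in C_(d+1)(t) without
   x-component, the endomorphism of the free functor C_(d+1) sending x to w and
   fixing the other generators would commute with f without being invertible,
   against right minimality of f.  For d >= 1, C_d and C_(d-1) are free as well.
   Should all generators of C_d below t lie below some j < t, the transition
   C_d(j) -> C_d(t) would be onto and C_(d-1)(j) -> C_(d-1)(t) injective, so the
   cycle f(x) would come from a cycle at j, i.e. from a boundary at j, which has
   no x-component; if there are no such generators at all, C_d(t) = 0 and
   f(x) = 0.  Hence every t in supp beta^(d+1) is the join of the nonempty set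
   of elements of supp beta^d below t, and a join of such joins is a join of
   elements of supp beta^d. *)

From Pilot Require Import Defs.
From HB Require Import structures.
From mathcomp Require Import all_boot all_order all_algebra.
Set Implicit Arguments. Unset Strict Implicit. Unset Printing Implicit Defensive.
Import Order.TTheory GRing.Theory.

Section FreeFunctor.
Variables (disp : Order.disp_t) (J : finPOrderType disp) (K : fieldType).
Variable m : J -> nat.
Local Notation FR := (Defs.free K m).
Local Open Scope ring_scope.
Local Open Scope order_scope.

Lemma gens_below_tag (x : gens m) : x \in gens_below m (tag x).
Proof. by rewrite inE. Qed.

Lemma tag_enum_val_le b (i : 'I_#|gens_below m b|) : tag (enum_val i) <= b.
Proof. by have := enum_valP i; rewrite inE. Qed.

Definition gen_idx (x : gens m) : 'I_#|gens_below m (tag x)| :=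
  enum_rank_in (gens_below_tag x) x.

Lemma enum_val_gen_idx x : enum_val (gen_idx x) = x.
Proof. by rewrite /gen_idx enum_rankK_in ?gens_below_tag. Qed.

Lemma free_fmap_id b : fmap FR b b = 1%:M.
Proof. by apply/matrixP => i j; rewrite !mxE (inj_eq enum_val_inj). Qed.

Lemma free_fmap_row b c (i : 'I_#|gens_below m b|)
    (ic : enum_val i \in gens_below m c) :
  row i (fmap FR b c) = 'e_(enum_rank_in ic (enum_val i)).
Proof.
apply/rowP => k; rewrite !mxE eqxx /= eq_sym.
by rewrite -(inj_eq enum_val_inj) enum_rankK_in.
Qed.

Lemma free_fmap_rowM b c p (B : 'M_(fdim FR c, p)) (i : 'I_#|gens_below m b|)
    (ic : enum_val i \in gens_below m c) :
  row i (fmap FR b c *m B) = row (enum_rank_in ic (enum_val i)) B.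
Proof. by rewrite row_mul free_fmap_row -rowE. Qed.

Lemma free_fmap_comp b c e : b <= c -> fmap FR b e = fmap FR b c *m fmap FR c e.
Proof.
move=> le_bc; apply/row_matrixP => i.
have ic : enum_val i \in gens_below m c.
  by rewrite inE (le_trans (tag_enum_val_le i)).
by rewrite (free_fmap_rowM _ ic); apply/rowP => k; rewrite !mxE enum_rankK_in.
Qed.

Lemma free_fmap_retract b c :
    (forall x : gens m, tag x <= c -> tag x <= b) ->
  fmap FR c b *m fmap FR b c = 1%:M.
Proof.
move=> below_b; apply/row_matrixP => i.
have ib : enum_val i \in gens_below m b by rewrite inE below_b ?tag_enum_val_le.
rewrite (free_fmap_rowM _ ib) row1; apply/rowP => k.
by rewrite !mxE enum_rankK_in // (inj_eq enum_val_inj) eq_sym.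
Qed.

Lemma row_free_free_fmap b c : b <= c -> row_free (fmap FR b c).
Proof.
move=> le_bc; apply/row_freeP; exists (fmap FR c b).
by apply: free_fmap_retract => x /le_trans; apply.
Qed.

Lemma row_full_free_fmap b c :
  (forall x : gens m, tag x <= c -> tag x <= b) -> row_full (fmap FR b c).
Proof.
move=> below_b; apply/row_fullP; exists (fmap FR c b).
exact: free_fmap_retract.
Qed.

Lemma free_fmap_mul_col_eq0 b c p (A : 'M_(p, fdim FR b)) i
    (k : 'I_#|gens_below m c|) :
  ~~ (tag (enum_val k) <= b) -> (A *m fmap FR b c) i k = 0.
Proof.
move=> not_le_kb; rewrite mxE big1 // => l _; rewrite mxE.
case: eqP => [el | _]; last by rewrite mulr0.
by rewrite -el tag_enum_val_le in not_le_kb.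
Qed.

End FreeFunctor.

Section Functors.
Variables (disp : Order.disp_t) (J : finPOrderType disp) (K : fieldType).
Implicit Types (C D E G : fdata J K).
Local Open Scope ring_scope.
Local Open Scope order_scope.

Definition right_minimal D E (f : ntrans D E) : Prop :=
  forall h : ntrans D D, natural h -> (forall a, h a *m f a = f a) -> is_iso h.

Definition iso_free C (m : J -> nat) : Prop :=
  exists eta : ntrans C (Defs.free K m), is_iso eta.

Lemma natural_mul D E G (f : ntrans D E) (g : ntrans E G) :
  natural f -> natural g -> natural (fun a => f a *m g a).
Proof.
move=> nat_f nat_g b c le_bc.
by rewrite mulmxA nat_f // -mulmxA nat_g // mulmxA.
Qed.

Section Isomorphism.
Variables (C G : fdata J K) (eta : ntrans C G) (theta : ntrans G C).
Hypotheses (nat_eta : natural eta) (nat_theta : natural theta).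
Hypothesis eta_theta :
  forall a, eta a *m theta a = 1%:M /\ theta a *m eta a = 1%:M.

Lemma iso_fmapE b c : b <= c -> fmap C b c = eta b *m fmap G b c *m theta c.
Proof.
by move=> le_bc; rewrite -nat_eta // -mulmxA (proj1 (eta_theta c)) mulmx1.
Qed.

Lemma row_free_iso_fmap b c :
  b <= c -> row_free (fmap G b c) -> row_free (fmap C b c).
Proof.
move=> le_bc /row_freeP[B GB]; rewrite iso_fmapE //; apply/row_freeP.
exists (eta c *m B *m theta b).
rewrite !mulmxA -(mulmxA _ (theta c)) (proj2 (eta_theta c)) mulmx1.
by rewrite -(mulmxA _ _ B) GB mulmx1 (proj1 (eta_theta b)).
Qed.

Lemma row_full_iso_fmap b c :
  b <= c -> row_full (fmap G b c) -> row_full (fmap C b c).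
Proof.
move=> le_bc /row_fullP[P PG]; rewrite iso_fmapE //; apply/row_fullP.
exists (eta c *m P *m theta b).
rewrite !mulmxA -(mulmxA _ (theta b)) (proj2 (eta_theta b)) mulmx1.
by rewrite -(mulmxA _ P) PG mulmx1 (proj1 (eta_theta c)).
Qed.

Lemma fdim_iso a : fdim C a = fdim G a.
Proof.
have [eta_theta_a theta_eta_a] := eta_theta a.
by apply/anti_leq; rewrite (mulmx1_min eta_theta_a) (mulmx1_min theta_eta_a).
Qed.

Lemma right_minimal_iso E (f : ntrans C E) :
  right_minimal f -> right_minimal (fun a => theta a *m f a).
Proof.
move=> min_f h nat_h h_fix.
have nat_h' : natural (fun a => eta a *m h a *m theta a).
  by do 2![apply: natural_mul => //].
have h'_fix a : eta a *m h a *m theta a *m f a = f a.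
  by rewrite -!mulmxA h_fix mulmxA (proj1 (eta_theta a)) mul1mx.
have [_ [k [nat_k k_inv]]] := min_f _ nat_h' h'_fix.
split=> //; exists (fun a => theta a *m k a *m eta a); split.
  by do 2![apply: natural_mul => //].
move=> a; have [hk kh] := k_inv a; split.
  transitivity (theta a *m (eta a *m h a *m theta a *m k a) *m eta a).
    by rewrite !mulmxA (proj2 (eta_theta a)) mul1mx.
  by rewrite hk mulmx1 (proj2 (eta_theta a)).
transitivity (theta a *m (k a *m (eta a *m h a *m theta a)) *m eta a).
  by rewrite !mulmxA -(mulmxA _ (theta a)) (proj2 (eta_theta a)) mulmx1.
by rewrite kh mulmx1 (proj2 (eta_theta a)).
Qed.
End Isomorphism.

Lemma exact_lift D E G (phi : ntrans D E) (g : ntrans E G) j t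
    (z : 'rV_(fdim E t)) :
    natural phi -> natural g -> j <= t -> (phi j == kermx (g j))%MS ->
    row_full (fmap E j t) -> row_free (fmap G j t) -> z *m g t = 0 ->
  exists u : 'rV_(fdim D j), z = u *m fmap D j t *m phi t.
Proof.
move=> nat_phi nat_g le_jt exact_j full_E free_G z_g.
have /submxP[y z_y] : (z <= fmap E j t)%MS by exact: submx_full.
have y_g : y *m g j = 0.
  apply/eqP; rewrite -(mulmx_free_eq0 _ free_G) -mulmxA -nat_g // mulmxA.
  by rewrite -z_y z_g.
have /submxP[u y_u] : (y <= phi j)%MS.
  by rewrite (eqmxP exact_j); exact/sub_kermxP.
by exists u; rewrite z_y y_u -mulmxA -nat_phi // mulmxA.
Qed.

End Functors.

Section MinimalFreeCover.
Variables (disp : Order.disp_t) (J : finPOrderType disp) (K : fieldType).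
Variables (m : J -> nat) (E : fdata J K).
Local Notation FR := (Defs.free K m).
Variable phi : ntrans FR E.
Hypotheses (nat_phi : natural phi) (min_phi : right_minimal phi).
Local Open Scope ring_scope.
Local Open Scope order_scope.

Lemma right_minimal_gen_coef_neq0 (x0 : gens m) (w : 'rV_(fdim FR (tag x0))) :
  w *m phi (tag x0) = row (gen_idx x0) (phi (tag x0)) -> w 0 (gen_idx x0) != 0.
Proof.
set t := tag x0; set i0 := gen_idx x0 => w_phi; apply/negP => /eqP w_i0.
pose h : ntrans FR FR := fun b => \matrix_i
  (if enum_val i == x0 then w *m fmap FR t b else row i 1%:M).
have nat_h : natural h.
  move=> b c le_bc; apply/row_matrixP => i.
  have ic : enum_val i \in gens_below m c.
    by rewrite inE (le_trans (tag_enum_val_le i)).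
  rewrite (free_fmap_rowM _ ic) row_mul !rowK enum_rankK_in //.
  case: eqP => [e_i | _].
    have le_tb : t <= b by rewrite /t -e_i tag_enum_val_le.
    by rewrite -mulmxA -free_fmap_comp.
  by rewrite row1 -row_mul mul1mx (free_fmap_row _ ic).
have h_fix b : h b *m phi b = phi b.
  apply/row_matrixP => i; rewrite row_mul rowK.
  case: eqP => [e_i | _]; last by rewrite -row_mul mul1mx.
  have le_tb : t <= b by rewrite /t -e_i tag_enum_val_le.
  have i0b : enum_val i0 \in gens_below m b.
    by rewrite enum_val_gen_idx inE -e_i tag_enum_val_le.
  rewrite -mulmxA nat_phi // mulmxA w_phi -row_mul -nat_phi //.
  rewrite (free_fmap_rowM _ i0b); congr row.
  by apply: enum_val_inj; rewrite (enum_rankK_in i0b i0b) enum_val_gen_idx.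
have h_col0 l : h t l i0 = 0.
  rewrite mxE; case: eqP => [_ | ne_l]; first by rewrite free_fmap_id mulmx1.
  rewrite !mxE; case: eqP => // e_l.
  by case: ne_l; rewrite e_l enum_val_gen_idx.
have [_ [k [_ k_inv]]] := min_phi nat_h h_fix.
move/matrixP: (proj2 (k_inv t)) => /(_ i0 i0).
rewrite !mxE eqxx big1 => [/eqP | l _]; last by rewrite h_col0 mulr0.
by rewrite eq_sym oner_eq0.
Qed.

End MinimalFreeCover.

Section FreeCoverGenerators.
Variables (disp : Order.disp_t) (J : finPOrderType disp) (K : fieldType).
Variables (m1 mE mG : J -> nat) (E G : fdata J K).
Variables (phi : ntrans (Defs.free K m1) E) (g : ntrans E G).
Hypotheses (nat_phi : natural phi) (nat_g : natural g).
Hypothesis min_phi : right_minimal phi.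
Hypothesis phi_exact : forall a, (phi a == kermx (g a))%MS.
Hypotheses (free_E : iso_free E mE) (free_G : iso_free G mG).
Local Open Scope ring_scope.
Local Open Scope order_scope.

Lemma gens_below_gen_nonempty (x0 : gens m1) :
  exists x : gens mE, tag x <= tag x0.
Proof.
case: (pickP (fun x : gens mE => tag x <= tag x0)) => [x le_x | none].
  by exists x.
have [eta [_ [theta [_ eta_theta]]]] := free_E.
have dimE0 : fdim E (tag x0) = 0%N.
  rewrite (fdim_iso eta_theta) /=; apply/eqP; rewrite cards_eq0; apply/eqP.
  by apply/setP => x; rewrite !inE none.
have row_eq0 : row (gen_idx x0) (phi (tag x0)) = 0.
  by apply/rowP => -[k lt_k]; exfalso; rewrite dimE0 in lt_k.
have := @right_minimal_gen_coef_neq0 _ _ _ _ _ _ nat_phi min_phi x0 0.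
by rewrite mul0mx row_eq0 mxE eqxx => /(_ erefl).
Qed.

Lemma gens_below_gen_unbounded (x0 : gens m1) j :
  j < tag x0 -> exists x : gens mE, (tag x <= tag x0) && ~~ (tag x <= j).
Proof.
set t := tag x0 => lt_jt; have le_jt := ltW lt_jt.
pose escapes (x : gens mE) := (tag x <= t) && ~~ (tag x <= j).
case: (pickP escapes) => [x escapes_x | none]; first by exists x.
have below_j (x : gens mE) : tag x <= t -> tag x <= j.
  by move=> le_xt; have := none x; rewrite /escapes le_xt => /negbFE.
have [etaE [nat_etaE [thetaE [_ etaE_theta]]]] := free_E.
have [etaG [nat_etaG [thetaG [_ etaG_theta]]]] := free_G.
have full_E : row_full (fmap E j t).
  apply: (row_full_iso_fmap nat_etaE etaE_theta le_jt).
  exact: row_full_free_fmap.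
have row_free_G : row_free (fmap G j t).
  apply: (row_free_iso_fmap nat_etaG etaG_theta le_jt).
  exact: row_free_free_fmap.
have z_g : row (gen_idx x0) (phi t) *m g t = 0.
  by apply/sub_kermxP; rewrite -(eqmxP (phi_exact t)) row_sub.
have [u z_u] :=
  exact_lift nat_phi nat_g le_jt (phi_exact j) full_E row_free_G z_g.
have := right_minimal_gen_coef_neq0 nat_phi min_phi (esym z_u).
by rewrite free_fmap_mul_col_eq0 ?eqxx // enum_val_gen_idx lt_geF.
Qed.

Lemma free_cover_gen_lub t : upper_semilattice J -> (0 < m1 t)%N ->
  is_lub [set s in supp mE | s <= t] t /\ [set s in supp mE | s <= t] != set0.
Proof.
move=> usl m1_t; set T := [set s in supp mE | s <= t].
pose x0 : gens m1 := Tagged (fun a => 'I_(m1 a)) (Ordinal m1_t).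
have gen_in_T (x : gens mE) : tag x <= t -> tag x \in T.
  move=> le_xt; rewrite !inE le_xt andbT -lt0n.
  exact: leq_ltn_trans (leq0n _) (ltn_ord (tagged x)).
have T_ne : T != set0.
  have [x /gen_in_T T_x] := gens_below_gen_nonempty x0.
  by apply/set0Pn; exists (tag x).
split=> //; have [j [j_ub j_least]] := usl T T_ne.
have le_jt : j <= t by apply: j_least => s; rewrite inE => /andP[].
have [<- // | ne_jt] := eqVneq j t.
have lt_jt : j < t by rewrite lt_neqAle ne_jt le_jt.
have [x /andP[/gen_in_T /j_ub le_xj]] :=
  gens_below_gen_unbounded (x0 := x0) lt_jt.
by rewrite le_xj.
Qed.

End FreeCoverGenerators.

Section MinimalResolution.
Variables (disp : Order.disp_t) (J : finPOrderType disp) (K : fieldType).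
Local Open Scope ring_scope.
Local Open Scope order_scope.

Lemma minimal_resolution_gen_lub (m1 mE mG : J -> nat) (D E G : fdata J K)
    (f : ntrans D E) (g : ntrans E G) t :
    upper_semilattice J -> natural f -> natural g -> right_minimal f ->
    (forall a, (f a == kermx (g a))%MS) ->
    iso_free D m1 -> iso_free E mE -> iso_free G mG -> (0 < m1 t)%N ->
  is_lub [set s in supp mE | s <= t] t /\ [set s in supp mE | s <= t] != set0.
Proof.
move=> usl nat_f nat_g min_f f_exact.
move=> [eta [nat_eta [theta [nat_theta eta_theta]]]] free_E free_G m1_t.
have exact_phi a : ((theta a *m f a) == kermx (g a))%MS.
  have full_theta : row_full (theta a).
    by apply/row_fullP; exists (eta a); exact: (proj1 (eta_theta a)).
  apply/eqmxP; exact: eqmx_trans (eqmxMfull _ full_theta) (eqmxP (f_exact a)).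
have min_phi := right_minimal_iso nat_eta nat_theta eta_theta min_f.
exact: free_cover_gen_lub (natural_mul nat_theta nat_f) nat_g min_phi exact_phi
  free_E free_G t usl m1_t.
Qed.

Lemma join_closure_sub (S1 S2 : {set J}) :
    (forall t, t \in S2 ->
       is_lub [set s in S1 | s <= t] t /\ [set s in S1 | s <= t] != set0) ->
  forall a, in_join_closure S2 a -> in_join_closure S1 a.
Proof.
move=> S2_lub a [T [T_ne T_S2 [a_ub a_least]]].
have [t0 T_t0] := set0Pn _ T_ne.
exists [set s in S1 | s <= a]; split.
- have [_ /set0Pn[s]] := S2_lub t0 (subsetP T_S2 _ T_t0).
  rewrite !inE => /andP[S1_s le_st0]; apply/set0Pn; exists s.
  by rewrite inE S1_s (le_trans le_st0 (a_ub _ T_t0)).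
- by apply/subsetP => s; rewrite inE => /andP[].
split=> [s | b b_ub]; first by rewrite inE => /andP[].
apply: a_least => t T_t; have [[_ t_least] _] := S2_lub t (subsetP T_S2 _ T_t).
apply: t_least => s; rewrite inE => /andP[S1_s le_st]; apply: b_ub.
by rewrite inE S1_s (le_trans le_st (a_ub _ T_t)).
Qed.

End MinimalResolution.

Theorem corollary4p2 (disp : Order.disp_t) (J : finPOrderType disp)
  (K : fieldType) (F : fdata J K) (beta : nat -> J -> nat) :
  upper_semilattice J ->
  is_functor F ->
  betti_diagrams F beta ->
  (exists m : J, forall a : J, a \in supp (beta 0%N) -> (m <= a)%O) ->
  forall d : nat, (1 <= d)%N ->
    forall a : J, in_join_closure (supp (beta d.+1)) a ->
                  in_join_closure (supp (beta d)) a.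
Proof.
(* Only C_(d+1), C_d and C_(d-1) enter the argument, and they are free for
   d >= 1: neither F nor the lower bound on supp (beta 0) plays a role. *)
move=> usl _ [C [f [[_ nat_f] _ exact_f min_f free_C]]] _ [//|d] _.
apply: join_closure_sub => t; rewrite inE -lt0n.
exact: minimal_resolution_gen_lub usl (nat_f d.+2) (nat_f d.+1) (min_f d.+2)
  (exact_f d.+1) (free_C _) (free_C _) (free_C _).
Qed.
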